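(* For any set of $n$ points in the plane there is a conflict-free coloring with respect to axis-parallel rectangles using $O(\sqrt{n}\log n)$ colors that allows weak deletions at the cost of one recoloring per deletion.
   Context: A coloring of a point set $P$ is conflict-free with respect to rectangles if every axis-parallel rectangle containing at least one point of $P$ contains a point whose color is unique among the points of $P$ it contains. Allowing weak deletions at cost one means: points can be deleted one at a time, each deletion recoloring at most one remaining point, such that the coloring remains valid and the number of colors never exceeds the initial bound. *)

From Stdlib Require Import Reals.
From mathcomp Require Import all_boot finmap.
From mathcomp Require Import Rstruct.

Set Implicit Arguments.
Unset Strict Implicit.
Unset Printing Implicit Defensive.

Local Open Scope fset_scope.

Definition point := (R * R)%type.

Definition in_rect (a1 b1 a2 b2 : R) (p : point) : Prop :=
  [/\ Rle a1 p.1, Rle p.1 b1, Rle a2 p.2 & Rle p.2 b2].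

Definition conflict_free (S : {fset point}) (c : point -> nat) : Prop :=
  forall a1 b1 a2 b2 : R,
    (exists p, p \in S /\ in_rect a1 b1 a2 b2 p) ->
    exists p, [/\ p \in S, in_rect a1 b1 a2 b2 p &
      forall q, q \in S -> in_rect a1 b1 a2 b2 q -> q <> p -> c q <> c p].

Definition colors_within (k : nat) (S : {fset point}) (c : point -> nat) : Prop :=
  forall p, p \in S -> c p < k.

Definition recolors_at_most_one (S : {fset point}) (c c' : point -> nat) : Prop :=
  exists x, forall p, p \in S -> p <> x -> c' p = c p.

(* weak_deletions k S c : c is a valid (conflict-free, <= k colors) coloring of S,
   and for every point p of S that an adversary may delete next, there is a new
   coloring of S \ p, obtained by recoloring at most one remaining point, from which
   the same property holds again (online strategy; the bound k never increases). *)
Inductive weak_deletions (k : nat) : {fset point} -> (point -> nat) -> Prop :=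
| WeakDel : forall S c,
    conflict_free S c ->
    colors_within k S c ->
    (forall p, p \in S -> exists c',
        recolors_at_most_one (S `\ p) c c' /\ weak_deletions k (S `\ p) c') ->
    weak_deletions k S c.

(* Let s = floor(sqrt n).  Repeatedly removing a north-east chain of more than
   s points, and then grouping the remaining points by the length of the longest
   north-east chain ending below them (Mirsky), splits P into at most n/s + s
   monotone chains.  Along a monotone chain, x + y (resp. x - y) is a key for
   which every rectangle cuts the chain in a key interval.  Giving the i-th point
   of chain j the colour L j + v2(i + 1) (ruler sequence) makes every key
   interval of every chain carry a unique maximal colour, which implies
   conflict-freeness with (log n + 1)(n/s + s) = O(sqrt n log n) colours.  This
   unique-maximum property survives the deletion of a point p with a single
   recolouring: if a key-neighbour l of p has a smaller colour, l inherits the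
   colour of p; otherwise p can be dropped as is. *)

From Stdlib Require Import Reals Lra Classical.
From mathcomp Require Import all_boot finmap.
From mathcomp Require Import Rstruct zify.

Set Implicit Arguments.
Unset Strict Implicit.
Unset Printing Implicit Defensive.
Local Open Scope fset_scope.
Local Open Scope R_scope.

Lemma exists_argmax_seq (A : eqType) (f : A -> R) (P : A -> Prop) (s : seq A) :
  (exists2 x, x \in s & P x) ->
  exists a, [/\ a \in s, P a & forall b, b \in s -> P b -> f b <= f a].
Proof.
elim: s => [|x s IH] [y ys Py]; first by rewrite in_nil in ys.
have [[a [as_ Pa amax]]|none] := classic (exists a, [/\ a \in s, P a &
  forall b, b \in s -> P b -> f b <= f a]).
- have [[Px ltax]|] := classic (P x /\ f a < f x).
  + exists x; split; rewrite ?mem_head //.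
    by move=> b; rewrite in_cons => /orP[/eqP->|/amax bmax /bmax]; lra.
  + move=> notx; exists a; split; rewrite ?in_cons ?as_ ?orbT //.
    move=> b; rewrite in_cons => /orP[/eqP->|/amax //] Px.
    by apply: Rnot_lt_le => ltax; apply: notx.
- have nos : ~ exists2 z, z \in s & P z by move/IH.
  move: ys; rewrite in_cons => /orP[/eqP eyx|ys]; last by case: nos; exists y.
  subst y; exists x; split; rewrite ?mem_head //.
  move=> b; rewrite in_cons => /orP[/eqP->|bs Pb]; first lra.
  by case: nos; exists b.
Qed.

(** * Key intervals with a unique maximal colour *)

Section ChainRuns.

Variables (ch : point -> nat) (key : point -> R).

Definition key_injective (S : {fset point}) : Prop :=
  forall p q, p \in S -> q \in S -> ch p = ch q -> key p = key q -> p = q.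

(* [T] is a key interval of a single chain of [S]. *)
Definition run (S : {fset point}) (T : point -> Prop) : Prop :=
  [/\ forall q, T q -> q \in S,
      forall a b, T a -> T b -> ch a = ch b &
      forall a b q, T a -> T b -> q \in S -> ch q = ch a ->
        key a <= key q <= key b -> T q].

Definition runs_have_strict_max (S : {fset point}) (c : point -> nat) : Prop :=
  forall T, run S T -> forall q0, T q0 ->
    exists2 m, T m & forall q, T q -> q <> m -> (c q < c m)%N.

Definition rect_convex (S : {fset point}) : Prop :=
  forall p q r a1 b1 a2 b2, p \in S -> q \in S -> r \in S ->
    ch q = ch p -> ch r = ch p -> key p <= key q <= key r ->
    in_rect a1 b1 a2 b2 p -> in_rect a1 b1 a2 b2 r -> in_rect a1 b1 a2 b2 q.

Definition colors_separate_chains (S : {fset point}) (c : point -> nat) : Prop :=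
  forall p q, p \in S -> q \in S -> c p = c q -> ch p = ch q.

Lemma conflict_free_of_runs S c :
  rect_convex S -> colors_separate_chains S c -> runs_have_strict_max S c ->
  conflict_free S c.
Proof.
move=> rectS sepS maxS a1 b1 a2 b2 [p0 [p0S p0R]].
pose T q := [/\ q \in S, ch q = ch p0 & in_rect a1 b1 a2 b2 q].
have runT : run S T.
{ split=> [q [] //|x y [_ -> _] [_ -> _] //|x y q [xS chx xR] [yS chy yR] qS chq lexqy].
  split=> //; first by rewrite chq.
  by apply: (rectS x q y) => //; rewrite ?chq // chy -chx. }
have [m [mS chm mR] mmax] := maxS T runT p0 (And3 p0S erefl p0R).
exists m; split=> // q qS qR qm e.
have chq : ch q = ch p0 by rewrite (sepS q m qS mS e).
by have := mmax q (And3 qS chq qR) qm; lia.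
Qed.

Definition outranked (S : {fset point}) (c : point -> nat) (p : point) : Prop :=
  forall a b, a \in S -> b \in S -> ch a = ch p -> ch b = ch p ->
    key a < key p < key b ->
    exists q, [/\ q \in S, ch q = ch p, q <> p, key a <= key q <= key b & (c p < c q)%N].

Definition straddles (T : point -> Prop) (p : point) : Prop :=
  exists a b, [/\ T a, T b, ch a = ch p & key a < key p < key b].

Lemma run_fsetD1_setU1 S T p :
  run (S `\ p) T -> p \in S -> straddles T p -> run S (fun q => T q \/ q = p).
Proof.
move=> [TS Tch Tconv] pS [a [b [Ta Tb cha [ltap ltpb]]]].
have chT x : T x \/ x = p -> ch x = ch p by case=> [Tx|->]; rewrite // (Tch x a).
split=> [q [/TS/fsetD1P[] //|->] //|x y /chT -> /chT -> //|].
move=> x y q Tx Ty qS chq [lexq leqy]; have [->|qp] := eqVneq q p; [by right | left].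
apply: (Tconv (if x == p then a else x) (if y == p then b else y)).
- by case: ifP => [//|/eqP xp]; case: Tx.
- by case: ifP => [//|/eqP yp]; case: Ty.
- exact/fsetD1P.
- by case: ifP; rewrite chq // (chT x Tx) cha.
- by split; case: ifP => [/eqP ep|_] //; subst; lra.
Qed.

Lemma run_fsetD1 S T p :
  key_injective S -> run (S `\ p) T -> ~ straddles T p -> run S T.
Proof.
move=> injS [TS Tch Tconv] nostraddle.
have TSp q : T q -> q \in S /\ q <> p by move/TS/fsetD1P => [/eqP].
split=> [q /TSp[] //|//|x y q Tx Ty qS chq [lexq leqy]].
have [eqp|qp] := eqVneq q p; last by apply: (Tconv x y) => //; apply/fsetD1P.
subst q; case: nostraddle; exists x, y; split=> //.
have [[xS xp] [yS yp]] := (TSp x Tx, TSp y Ty).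
have chy : ch y = ch p by rewrite (Tch y x Ty Tx).
split; apply: Rnot_le_lt => le; [apply: xp | apply: yp]; apply: injS => //; lra.
Qed.

Lemma runs_have_strict_max_fsetD1 S c p :
  key_injective S -> runs_have_strict_max S c -> p \in S -> outranked S c p ->
  runs_have_strict_max (S `\ p) c.
Proof.
move=> injS maxS pS outp T runT q0 Tq0.
have [TS Tch Tconv] := runT.
have [straddle|nostraddle] := classic (straddles T p); last first.
  exact: maxS (run_fsetD1 injS runT nostraddle) q0 Tq0.
have [m [Tm|->] mmax] := maxS _ (run_fsetD1_setU1 runT pS straddle) q0 (or_introl Tq0).
  by exists m => // q Tq qm; apply: mmax; first left.
have [a [b [Ta Tb cha ltapb]]] := straddle.
have [/fsetD1P[_ aS] /fsetD1P[_ bS]] := (TS a Ta, TS b Tb).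
have chb : ch b = ch p by rewrite -(Tch a b Ta Tb).
have [q [qS chq qp leaqb ltpq]] := outp a b aS bS cha chb ltapb.
have Tq : T q by apply: (Tconv a b) => //; [apply/fsetD1P; split=> //; apply/eqP | rewrite chq cha].
by have := mmax q (or_introl Tq) qp; lia.
Qed.

Lemma runs_have_strict_max_transport S1 S2 c1 c2 (f : point -> point) :
  {in S1 &, injective f} -> {in S1, forall x, f x \in S2} ->
  (forall y, y \in S2 -> exists2 x, x \in S1 & f x = y) ->
  {in S1, forall x, ch (f x) = ch x} ->
  {in S1 &, forall x y, ch x = ch y -> key (f x) <= key (f y) -> key x <= key y} ->
  {in S1, forall x, c2 (f x) = c1 x} ->
  runs_have_strict_max S2 c2 -> runs_have_strict_max S1 c1.
Proof.
move=> finj fS fsurj fch fkey fc maxS2 T [TS Tch Tconv] q0 Tq0.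
pose fT y := exists2 x, T x & f x = y.
have runfT : run S2 fT.
{ split=> [_ [x Tx <-]|_ _ [x Tx <-] [y Ty <-]|_ _ q [a Ta <-] [b Tb <-]].
  - exact/fS/TS.
  - by rewrite (fch x (TS x Tx)) (fch y (TS y Ty)); apply: Tch.
  - have [aS bS] := (TS a Ta, TS b Tb).
    case/fsurj=> x xS <-; rewrite (fch x xS) (fch a aS) => chxa [lefa lefb].
    exists x => //; apply: (Tconv a b) => //.
    by split; apply: fkey => //; rewrite chxa // (Tch a b). }
have [_ [m Tm <-] mmax] := maxS2 fT runfT (f q0) (ex_intro2 _ _ q0 Tq0 erefl).
exists m => // q Tq qm; rewrite -!fc ?TS //; apply: mmax; first by exists q.
by move/(finj _ _ (TS q Tq) (TS m Tm)).
Qed.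

Definition adjacent (S : {fset point}) (l p : point) : Prop :=
  ch l = ch p /\
  forall z, z \in S -> ch z = ch p -> z <> l -> z <> p ->
    (key z < key l /\ key z < key p) \/ (key l < key z /\ key p < key z).

Lemma runs_have_strict_max_recolor S c l p :
  p \in S -> l \in S -> l <> p -> adjacent S l p ->
  runs_have_strict_max (S `\ l) c ->
  runs_have_strict_max (S `\ p) (fun q => if q == l then c p else c q).
Proof.
move=> pS lS lp [chl adj].
apply: (runs_have_strict_max_transport (f := fun q => if q == l then p else q)).
- move=> x y /fsetD1P[/eqP xp _] /fsetD1P[/eqP yp _].
  case: (eqVneq x l) => [->|_]; case: (eqVneq y l) => [->|_] // e;
    by [case: yp; rewrite e | case: xp; rewrite e].
- move=> x /fsetD1P[xp xS]; apply/fsetD1P.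
  by case: (eqVneq x l) => [_|xl]; split => //; rewrite eq_sym; apply/eqP.
- move=> y /fsetD1P[yl yS]; have [->|yp] := eqVneq y p.
  + by exists l; rewrite ?eqxx //; apply/fsetD1P; split=> //; apply/eqP.
  + by exists y; [apply/fsetD1P | rewrite (negPf yl)].
- by move=> x _; case: (eqVneq x l) => [->|]; rewrite ?chl.
- move=> x y /fsetD1P[/eqP xp xS] /fsetD1P[/eqP yp yS].
  case: (eqVneq x l) => [->|/eqP xl]; case: (eqVneq y l) => [->|/eqP yl] //; try lra.
  + move=> chy; have := adj y yS (etrans (esym chy) chl) yl yp; lra.
  + move=> chx; have := adj x xS (etrans chx chl) xl xp; lra.
- by move=> x _; case: (x == l).
Qed.

Lemma exists_left_adjacent S p a :
  key_injective S -> p \in S -> a \in S -> ch a = ch p -> key a < key p ->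
  exists l, [/\ l \in S, key a <= key l, key l < key p & adjacent S l p].
Proof.
move=> injS pS aS cha ltap.
have [l [lS [chl ltlp] lmax]] := exists_argmax_seq key
  (P := fun z => ch z = ch p /\ key z < key p) (ex_intro2 _ _ a aS (conj cha ltap)).
exists l; split=> //; first exact: lmax.
split=> // z zS chz zl zp.
have [ltzp|lepz] := Rlt_le_dec (key z) (key p).
- left; split=> //; case/Rle_lt_or_eq_dec: (lmax z zS (conj chz ltzp)) => // e.
  by case: zl; apply: injS; rewrite ?chl.
- right; split; first lra.
  case/Rle_lt_or_eq_dec: lepz => // e.
  by case: zp; apply: injS.
Qed.

Lemma adjacent_run S l p :
  l \in S -> p \in S -> adjacent S l p -> run S (fun q => q = l \/ q = p).
Proof.
move=> lS pS [chl adj].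
split=> [q [->|->] //|x y [->|->] [->|->] //|x y q Tx Ty qS chq lexqy].
have chx : ch x = ch p by case: Tx => ->.
have [ql|nql] := classic (q = l); first by left.
have [qp|nqp] := classic (q = p); first by right.
by case: Tx => ex; case: Ty => ey; subst x y; case: (adj q qS (etrans chq chx) nql nqp); lra.
Qed.

Lemma adjacent_colors_neq S c l p :
  runs_have_strict_max S c -> l \in S -> p \in S -> l <> p -> adjacent S l p ->
  c l <> c p.
Proof.
move=> maxS lS pS lp adj e.
have [m Tm mmax] := maxS _ (adjacent_run lS pS adj) l (or_introl erefl).
case: Tm => em; subst m.
- by have := mmax p (or_intror erefl) (nesym lp); lia.
- by have := mmax l (or_introl erefl) lp; lia.
Qed.

Lemma adjacent_outranked S c l p :
  p \in S -> l <> p -> adjacent S l p -> (c l < c p)%N -> outranked S c l.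
Proof.
move=> pS lp [chl adj] ltlp a b aS bS cha chb [ltal ltlb].
have between z : z \in S -> ch z = ch l ->
    (key z < key l -> key z <= key p) /\ (key l < key z -> key p <= key z).
  move=> zS chz; have [->|/eqP zp] := eqVneq z p; first by split=> ?; lra.
  have [->|/eqP zl] := eqVneq z l; first by split=> ?; lra.
  by case: (adj z zS (etrans chz chl) zl zp); split=> ?; lra.
exists p; split=> //; first exact: nesym.
by split; [apply: (between a aS cha).1 | apply: (between b bS chb).2].
Qed.

Lemma outranked_of_adjacent S c p :
  key_injective S -> runs_have_strict_max S c -> p \in S ->
  (forall l, l \in S -> l <> p -> adjacent S l p -> (c p <= c l)%N) ->
  outranked S c p.
Proof.
move=> injS maxS pS ge_adj a b aS bS cha chb [ltap ltpb].
have [l [lS leal ltlp adj]] := exists_left_adjacent injS pS aS cha ltap.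
have lp : l <> p by move=> e; rewrite e in ltlp; lra.
have := adjacent_colors_neq maxS lS pS lp adj; have := ge_adj l lS lp adj.
by exists l; split=> //; [case: adj | split; lra | lia].
Qed.

(* When [l] inherits the colour of [p], the new colouring of [S `\ p] is the
   colouring of [S `\ l] with [l] moved to the place of [p]. *)
Lemma runs_fsetD1 k S c p :
  key_injective S -> colors_separate_chains S c -> runs_have_strict_max S c ->
  colors_within k S c -> p \in S ->
  exists c', [/\ recolors_at_most_one (S `\ p) c c',
    colors_separate_chains (S `\ p) c', runs_have_strict_max (S `\ p) c'
    & colors_within k (S `\ p) c'].
Proof.
move=> injS sepS maxS colS pS.
have [[l [lS lp adj ltlp]]|noless] := classic
  (exists l, [/\ l \in S, l <> p, adjacent S l p & (c l < c p)%N]).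
- have [chl _] := adj.
  exists (fun q => if q == l then c p else c q); split.
  + by exists l => q _ /eqP/negPf ->.
  + move=> x y /fsetD1P[_ xS] /fsetD1P[_ yS].
    case: (eqVneq x l) => [->|_]; case: (eqVneq y l) => [->|_] // e.
    * by rewrite chl (sepS p y pS yS e).
    * by rewrite chl (sepS x p xS pS e).
    * exact: sepS.
  + apply: runs_have_strict_max_recolor => //.
    exact: runs_have_strict_max_fsetD1 (adjacent_outranked pS lp adj ltlp).
  + by move=> q /fsetD1P[_ qS]; case: (q == l); apply: colS.
- exists c; split=> //.
  + by exists p.
  + by move=> x y /fsetD1P[_ xS] /fsetD1P[_ yS]; apply: sepS.
  + apply: runs_have_strict_max_fsetD1 (outranked_of_adjacent injS maxS pS _) => //.
    by move=> l lS lp adj; rewrite leqNgt; apply/negP => ltlp; apply: noless; exists l.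
  + by move=> q /fsetD1P[_ qS]; apply: colS.
Qed.

End ChainRuns.

Definition chain_coloring (k : nat) (S : {fset point}) (c : point -> nat) : Prop :=
  exists ch key, [/\ key_injective ch key S, rect_convex ch key S,
    colors_separate_chains ch S c, runs_have_strict_max ch key S c
    & colors_within k S c].

Lemma chain_coloring_fsetD1 k S c p :
  chain_coloring k S c -> p \in S ->
  exists c', recolors_at_most_one (S `\ p) c c' /\ chain_coloring k (S `\ p) c'.
Proof.
case=> ch [key [injS rectS sepS maxS colS]] pS.
have [c' [rec sep' max' col']] := runs_fsetD1 injS sepS maxS colS pS.
exists c'; split=> //; exists ch, key; split=> //.
- by move=> x y /fsetD1P[_ xS] /fsetD1P[_ yS]; apply: injS.
- move=> x y z a1 b1 a2 b2 /fsetD1P[_ xS] /fsetD1P[_ yS] /fsetD1P[_ zS].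
  exact: rectS.
Qed.

Lemma chain_coloring_weak_deletions k S c :
  chain_coloring k S c -> weak_deletions k S c.
Proof.
move: c; have [n] := ubnP #|` S|; elim: n S => // n IH S ltSn c invS.
have [ch [key [_ rectS sepS maxS colS]]] := invS.
apply: WeakDel => [|//|p pS]; first exact: conflict_free_of_runs rectS sepS maxS.
have [c' [rec inv']] := chain_coloring_fsetD1 invS pS.
exists c'; split=> //; apply: IH inv'.
by move: ltSn; rewrite (cardfsD1 p S) pS; lia.
Qed.

(** * Ruler colourings *)

Lemma logn2_gap i k : (i < k)%N -> logn 2 i.+1 = logn 2 k.+1 ->
  exists2 u, (i < u < k)%N & (logn 2 i.+1 < logn 2 u.+1)%N.
Proof.
move=> ltik e.
have [a a2 ia] := pfactor_coprime (isT : prime 2) (ltn0Sn i).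
have [b b2 kb] := pfactor_coprime (isT : prime 2) (ltn0Sn k).
rewrite -e in kb; set v := logn 2 i.+1 in ia kb *.
have oa : odd a by rewrite -coprimen2 coprime_sym.
have ob : odd b by rewrite -coprimen2 coprime_sym.
have v_gt0 : (0 < 2 ^ v)%N by rewrite expn_gt0.
have ltab : (a < b)%N by rewrite -(ltn_pmul2r v_gt0) -ia -kb.
have ltab1 : (a.+1 < b)%N.
  by rewrite ltn_neqAle ltab andbT; apply: contraTneq ob => <-; rewrite /= oa.
exists (a.+1 * 2 ^ v).-1; first by apply/andP; split; nia.
have -> : (a.+1 * 2 ^ v).-1.+1 = (a.+1 * 2 ^ v)%N by nia.
rewrite -pfactor_dvdn ?muln_gt0 // expnS dvdn_pmul2r //.
by rewrite dvdn2 /= oa.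
Qed.

Lemma ruler_strict_max_sorted (A : eqType) (r : rel A) (s : seq A) (T : A -> Prop) :
  transitive r -> reflexive r -> uniq s -> sorted r s ->
  (forall a, T a -> a \in s) ->
  (forall a b z, T a -> T b -> z \in s -> r a z -> r z b -> T z) ->
  forall q0, T q0 -> exists2 m, T m &
    forall q, T q -> q <> m -> (logn 2 (index q s).+1 < logn 2 (index m s).+1)%N.
Proof.
move=> r_tr r_refl s_uniq s_sorted Ts Tconv q0 Tq0.
pose rk q := logn 2 (index q s).+1.
have [m [_ Tm mmax]] := exists_argmax_seq (fun q => INR (rk q))
  (ex_intro2 _ _ q0 (Ts q0 Tq0) Tq0).
have {}mmax q : T q -> (rk q <= rk m)%N.
  by move=> Tq; apply/leP/INR_le/mmax => //; exact: Ts.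
have r_nth i j : (i <= j < size s)%N -> r (nth m s i) (nth m s j).
  by case/andP=> le_ij lt_js; apply: sorted_leq_nth; rewrite ?inE //; lia.
have gap a b : T a -> T b -> (index a s < index b s)%N -> rk a = rk b -> (rk a < rk m)%N.
{ move=> Ta Tb ltab eab.
  have [u /andP[ltau ltub] ltrk] := logn2_gap ltab eab.
  have bs : (index b s < size s)%N by rewrite index_mem Ts.
  have us : (u < size s)%N by lia.
  have Tz : T (nth m s u).
  { apply: (Tconv a b); rewrite ?mem_nth //.
    - by rewrite -(nth_index m (Ts a Ta)) r_nth //; lia.
    - by rewrite -(nth_index m (Ts b Tb)) r_nth //; lia. }
  by apply: leq_trans (mmax _ Tz); rewrite /rk index_uniq. }
exists m => // q Tq qm.
rewrite ltn_neqAle mmax // andbT; apply/eqP => e.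
have [ltqm|ltmq|eqi] := ltngtP (index q s) (index m s).
- by have := gap q m Tq Tm ltqm e; rewrite /rk; lia.
- by have := gap m q Tm Tq ltmq (esym e); rewrite /rk; lia.
- by case: qm; rewrite -(nth_index m (Ts q Tq)) eqi nth_index // Ts.
Qed.

Section RulerColoring.

Variables (S : {fset point}) (ch : point -> nat) (key : point -> R).

Definition key_le : rel point := fun x y => Rleb (key x) (key y).

Lemma key_le_total : total key_le.
Proof.
move=> x y; rewrite /key_le.
by case: (RlebP (key x) (key y)) => //= ?; apply/RlebP; lra.
Qed.

Lemma key_le_trans : transitive key_le.
Proof. by move=> y x z /RlebP ? /RlebP ?; apply/RlebP; lra. Qed.

Lemma key_le_refl : reflexive key_le.
Proof. by move=> x; apply/RlebP; lra. Qed.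

Definition chain_seq (j : nat) : seq point := sort key_le [seq q <- S | ch q == j].

(* [logn 2 i.+1] runs through the ruler sequence 0 1 0 2 0 1 0 3 ... *)
Definition ruler_color (L : nat) (q : point) : nat :=
  (L * ch q + logn 2 (index q (chain_seq (ch q))).+1)%N.

Lemma mem_chain_seq j q : (q \in chain_seq j) = (q \in S) && (ch q == j).
Proof. by rewrite mem_sort mem_filter andbC. Qed.

Lemma ruler_color_strict_max L : runs_have_strict_max ch key S (ruler_color L).
Proof.
move=> T [TS Tch Tconv] q0 Tq0.
set s := chain_seq (ch q0).
have Ts a : T a -> a \in s by move=> Ta; rewrite mem_chain_seq TS //= (Tch a q0).
have Tconv_s a b z : T a -> T b -> z \in s -> key_le a z -> key_le z b -> T z.
  move=> Ta Tb; rewrite mem_chain_seq => /andP[zS /eqP chz] /RlebP ? /RlebP ?.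
  by apply: (Tconv a b z) => //; rewrite chz (Tch a q0).
have s_uniq : uniq s by rewrite sort_uniq filter_uniq // fset_uniq.
have [m Tm mmax] := ruler_strict_max_sorted key_le_trans key_le_refl s_uniq
  (sort_sorted key_le_total _) Ts Tconv_s Tq0.
exists m => // q Tq qm; rewrite /ruler_color (Tch q q0) // (Tch m q0) // ltn_add2l.
exact: mmax.
Qed.

Lemma ruler_index_lt L q : (#|` S| < 2 ^ L)%N -> q \in S ->
  (logn 2 (index q (chain_seq (ch q))).+1 < L)%N.
Proof.
move=> ltSL qS; set i := index q _; rewrite -(ltn_exp2l _ _ (isT : 1 < 2)%N).
have : (i < size (chain_seq (ch q)))%N by rewrite index_mem mem_chain_seq qS eqxx.
have : (size (chain_seq (ch q)) <= #|` S|)%N by rewrite size_sort size_filter count_size.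
by have := dvdn_leq (ltn0Sn i) (pfactor_dvdnn 2 i.+1); lia.
Qed.

End RulerColoring.

(** * Monotone chains in the plane *)

Definition le_ne (p q : point) : Prop := p.1 <= q.1 /\ p.2 <= q.2.
Definition le_se (p q : point) : Prop := p.1 <= q.1 /\ q.2 <= p.2.

Lemma le_ne_anti p q : le_ne p q -> le_ne q p -> p = q.
Proof. by case: p q => [? ?] [? ?] [/= ? ?] [/= ? ?]; f_equal; lra. Qed.

Definition comparable (up : bool) (p q : point) : Prop :=
  let le := if up then le_ne else le_se in le p q \/ le q p.

Definition chain_key (up : bool) (p : point) : R :=
  if up then p.1 + p.2 else p.1 - p.2.

Lemma chain_key_inj up p q :
  comparable up p q -> chain_key up p = chain_key up q -> p = q.
Proof.
case: up; case: p => p1 p2; case: q => q1 q2;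
  rewrite /comparable /chain_key /le_ne /le_se /=;
  by move=> [[? ?]|[? ?]] ?; f_equal; lra.
Qed.

Lemma chain_key_in_rect up p q r a1 b1 a2 b2 :
  comparable up p q -> comparable up q r ->
  chain_key up p <= chain_key up q <= chain_key up r ->
  in_rect a1 b1 a2 b2 p -> in_rect a1 b1 a2 b2 r -> in_rect a1 b1 a2 b2 q.
Proof.
case: up; case: p => p1 p2; case: q => q1 q2; case: r => r1 r2;
  rewrite /comparable /chain_key /le_ne /le_se /in_rect /=;
  by move=> [[? ?]|[? ?]] [[? ?]|[? ?]] [? ?] [? ? ? ?] [? ? ? ?]; split; lra.
Qed.

Lemma chain_coloring_ruler S ch up t L :
  (forall p, p \in S -> ch p < t)%N ->
  (forall p q, p \in S -> q \in S -> ch p = ch q -> comparable (up (ch p)) p q) ->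
  (#|` S| < 2 ^ L)%N ->
  chain_coloring (L * t) S (ruler_color S ch (fun q => chain_key (up (ch q)) q) L).
Proof.
move=> cht comp ltSL; set key := fun q => _.
have ruler_lt q : q \in S -> (logn 2 (index q (chain_seq S ch key (ch q))).+1 < L)%N.
  exact: ruler_index_lt.
exists ch, key; split.
- move=> p q pS qS e; rewrite /key -e; exact: chain_key_inj (comp p q pS qS e).
- move=> p q r a1 b1 a2 b2 pS qS rS chq chr; rewrite /key chq chr.
  apply: chain_key_in_rect; first exact: comp.
  by rewrite -chq; apply: comp; rewrite ?chr.
- move=> p q pS qS; rewrite /ruler_color.
  by have := ruler_lt p pS; have := ruler_lt q qS; nia.
- exact: ruler_color_strict_max.
- move=> p pS; rewrite /ruler_color.
  by have := ruler_lt p pS; have := cht p pS; nia.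
Qed.

Definition le_neb (p q : point) : bool := Rleb p.1 q.1 && Rleb p.2 q.2.

Lemma le_neP p q : reflect (le_ne p q) (le_neb p q).
Proof. by apply: (iffP andP) => -[? ?]; split; apply/RlebP. Qed.

Definition ne_chain (A : {fset point}) : bool :=
  all (fun x => all (fun y => le_neb x y || le_neb y x) A) A.

Lemma ne_chainP A : reflect {in A &, forall x y, comparable true x y} (ne_chain A).
Proof.
apply: (iffP allP) => [chA x y /chA /allP chx /chx|chA x xA].
- by case/orP => /le_neP; [left | right].
- by apply/allP => y yA; case: (chA x y xA yA) => /le_neP ->; rewrite ?orbT.
Qed.

Definition ne_height (S : {fset point}) (p : point) : nat :=
  \max_(A <- fpowerset S | ne_chain A && all (le_neb^~ p) A) #|` A|.

Lemma ne_height_gt0 S p : p \in S -> (0 < ne_height S p)%N.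
Proof.
move=> pS; rewrite -(cardfs1 p); apply: leq_bigmax_seq.
- by rewrite fpowersetE fsub1set.
- apply/andP; split; first by apply/ne_chainP => x y /fset1P -> /fset1P ->; left; split; lra.
  by apply/allP => x /fset1P ->; apply/le_neP; split; lra.
Qed.

Lemma ne_height_le S p s :
  (forall A, A `<=` S -> ne_chain A -> (#|` A| <= s)%N) -> (ne_height S p <= s)%N.
Proof.
by move=> small; apply/bigmax_leqP_seq => A; rewrite fpowersetE => AS /andP[/(small A AS)].
Qed.

Lemma ne_height_lt S p q :
  p \in S -> q <> p -> le_ne q p -> (ne_height S q < ne_height S p)%N.
Proof.
move=> pS qp le_qp; rewrite -(prednK (ne_height_gt0 pS)) ltnS.
apply/bigmax_leqP_seq => A; rewrite fpowersetE => AS /andP[/ne_chainP chA /allP belowA].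
have below x : x \in A -> le_ne x p.
  by move=> /belowA/le_neP [? ?]; case: le_qp => ? ?; split; lra.
have pA : p \notin A.
  by apply/negP => /belowA/le_neP le_pq; case: qp; apply: le_ne_anti.
have cardpA : #|` p |` A| = #|` A|.+1 by rewrite cardfsU1 pA.
rewrite -ltnS prednK ?ne_height_gt0 // -cardpA; apply: leq_bigmax_seq.
- by rewrite fpowersetE fsubUset fsub1set pS.
- apply/andP; split.
  + apply/ne_chainP => x y /fset1UP[->|xA] /fset1UP[->|yA].
    * by left; split; lra.
    * by right; apply: below.
    * by left; apply: below.
    * exact: chA.
  + by apply/allP => x /fset1UP[->|/below ?] /=; apply/le_neP => //; split; lra.
Qed.

(* Mirsky: points of equal height are north-east incomparable. *)
Lemma se_chain_cover S s :
  (forall A, A `<=` S -> ne_chain A -> (#|` A| <= s)%N) ->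
  exists h : point -> nat, (forall p, p \in S -> h p < s)%N /\
    forall p q, p \in S -> q \in S -> h p = h q -> comparable false p q.
Proof.
move=> small; exists (fun p => (ne_height S p).-1); split.
  by move=> p pS; have := ne_height_gt0 pS; have := ne_height_le p small; lia.
move=> p q pS qS e; have [->|pq] := classic (p = q); first by left; split; lra.
have hp := ne_height_gt0 pS; have hq := ne_height_gt0 qS.
have npq : ~ le_ne p q by move/(ne_height_lt qS pq); lia.
have nqp : ~ le_ne q p by move/(ne_height_lt pS (nesym pq)); lia.
move: npq nqp; case: p q {pS qS e pq hp hq} => [p1 p2] [q1 q2].
rewrite /comparable /le_ne /le_se /= => npq nqp.
have [le1|lt1] := Rle_lt_dec p1 q1.
- by left; split=> //; apply: Rnot_lt_le => lt2; apply: npq; split; lra.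
- by right; split; [lra | apply: Rnot_lt_le => lt2; apply: nqp; split; lra].
Qed.

Lemma monotone_chain_decomposition s S : (0 < s)%N ->
  exists (ch : point -> nat) (up : nat -> bool) (t : nat),
  [/\ (t <= #|` S| %/ s + s)%N, (forall p, p \in S -> ch p < t)%N &
      forall p q, p \in S -> q \in S -> ch p = ch q -> comparable (up (ch p)) p q].
Proof.
move=> s_gt0; have [n] := ubnP #|` S|; elim: n S => // n IH S ltSn.
have [[A [AS ltsA /ne_chainP chA]]|small] := classic
  (exists A, [/\ A `<=` S, (s < #|` A|)%N & ne_chain A]).
- have cardSA : #|` S `\` A| = (#|` S| - #|` A|)%N by rewrite cardfsDS.
  have leAS : (#|` A| <= #|` S|)%N by apply: fsubset_leq_card.
  have ltSAn : (#|` S `\` A| < n)%N by rewrite cardSA; lia.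
  have [ch [up [t [tle cht comp]]]] := IH (S `\` A) ltSAn.
  exists (fun p => if p \in A then 0%N else (ch p).+1),
    (fun j => if j is j'.+1 then up j' else true), t.+1; split.
  + have : ((#|` S| - #|` A|) %/ s + 1 <= #|` S| %/ s)%N.
      by rewrite -divnDMl // mul1n leq_div2r //; lia.
    by rewrite cardSA in tle; lia.
  + by move=> p pS; case: ifP => pA //; rewrite ltnS; apply: cht; rewrite in_fsetD pA pS.
  + move=> p q pS qS; case: ifP => pA; case: ifP => qA //= e; first exact: chA.
    by apply: comp (succn_inj e); rewrite in_fsetD ?pA ?qA.
- have le_s A : A `<=` S -> ne_chain A -> (#|` A| <= s)%N.
    by move=> AS chA; rewrite leqNgt; apply/negP => ltsA; apply: small; exists A.
  have [h [hs hcomp]] := se_chain_cover le_s.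
  by exists h, (fun _ => false), s; split=> //; apply: leq_addl.
Qed.

(** * Counting colours *)

Lemma ln_le_ln x y : 0 < x -> x <= y -> ln x <= ln y.
Proof. by move=> x_gt0 /Rle_lt_or_eq_dec [lt|->]; [left; apply: ln_increasing | lra]. Qed.

Lemma INR_expn m k : INR (m ^ k) = INR m ^ k.
Proof. by elim: k => // k IH; rewrite expnS mult_INR IH. Qed.

Lemma trunc_log2_succ_le_ln n : (3 <= n)%N -> INR (trunc_log 2 n).+1 <= 3 * ln (INR n).
Proof.
move=> n_ge3; set T := trunc_log 2 n.
have n_ge3R : INR 3 <= INR n by apply/le_INR/leP.
rewrite /= in n_ge3R.
have ln_ge1 : 1 <= ln (INR n).
  by rewrite -(ln_exp 1); apply: ln_le_ln; [apply: exp_pos | have := exp_le_3; lra].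
have : INR T * ln 2 <= ln (INR n).
  rewrite -ln_pow; last lra.
  apply: ln_le_ln; first by apply: pow_lt; lra.
  by rewrite -[2]/(INR 2) -INR_expn; apply/le_INR/leP/trunc_logP => //; lia.
have := ln_lt_2; have := pos_INR T; rewrite S_INR; nra.
Qed.

Lemma INR_sqrt_le n : INR (Nat.sqrt n) <= sqrt (INR n).
Proof.
rewrite -(sqrt_square (INR (Nat.sqrt n))); last exact: pos_INR.
apply: sqrt_le_1_alt.
by rewrite -mult_INR; apply: le_INR; case: (Nat.sqrt_spec' n).
Qed.

Lemma divn_add_le n s : (0 < s)%N -> (n < s.+1 * s.+1)%N -> (n %/ s + s <= 5 * s)%N.
Proof.
move=> s_gt0 lt_n; suff : (n %/ s < 4 * s)%N by lia.
by rewrite ltn_divLR //; nia.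
Qed.

Lemma color_count_le n t : (3 <= n)%N -> (t <= n %/ Nat.sqrt n + Nat.sqrt n)%N ->
  INR ((trunc_log 2 n).+1 * t) <= 15 * sqrt (INR n) * ln (INR n).
Proof.
move=> n_ge3 t_le; have [le_sq lt_sq] := Nat.sqrt_spec' n.
have s_gt0 : (0 < Nat.sqrt n)%N by nia.
have tR : INR t <= 5 * sqrt (INR n).
  have : (t <= 5 * Nat.sqrt n)%N by apply: leq_trans t_le (divn_add_le s_gt0 _); apply/ltP.
  by move/leP/le_INR; rewrite mult_INR /=; have := INR_sqrt_le n; lra.
have LR := trunc_log2_succ_le_ln n_ge3.
rewrite mult_INR; have := pos_INR t; have := pos_INR (trunc_log 2 n).+1.
by move=> ? ?; apply: Rle_trans (_ : _ <= 3 * ln (INR n) * (5 * sqrt (INR n))) _; nra.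
Qed.

Theorem mainTheorem13 :
  exists (C : R) (n0 : nat), Rlt 0 C /\
    forall P : {fset point}, (n0 <= #|` P|)%N ->
      exists (k : nat) (c : point -> nat),
        Rle (INR k) (Rmult (Rmult C (sqrt (INR #|` P|))) (ln (INR #|` P|))) /\
        weak_deletions k P c.
Proof.
exists 15, 3%N; split; first lra.
move=> P n_ge3.
have s_gt0 : (0 < Nat.sqrt #|` P|)%N by have [_] := Nat.sqrt_spec' #|` P|; nia.
have [ch [up [t [t_le cht comp]]]] := monotone_chain_decomposition P s_gt0.
set L := (trunc_log 2 #|` P|).+1.
exists (L * t)%N, (ruler_color P ch (fun q => chain_key (up (ch q)) q) L); split.
  exact: color_count_le.
apply/chain_coloring_weak_deletions/chain_coloring_ruler => //.
exact: trunc_log_ltn.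
Qed.
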